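(* Let $a,c\in\mathbb{C}\setminus\{0\}$ and $b,d\in\mathbb{C}$ with $ad-bc\neq 0$, and let $M(z)=\dfrac{az+b}{cz+d}$. Then $St_M$ has no irrationally indifferent fixed point, and consequently the Fatou set of $St_M$ contains no invariant Siegel disc.
   Context: For a non-constant rational function $f$, Stirling's iterative root-finding method is $St_f(z)=z-\dfrac{f(z)}{f'\big(z-f(z)\big)}$, regarded as a rational self-map of $\widehat{\mathbb{C}}$. A fixed point is irrationally indifferent if its multiplier is $e^{2\pi i\theta}$ with $\theta\in\mathbb{R}\setminus\mathbb{Q}$. An invariant Siegel disc is a Fatou component $U$ with $St_M(U)=U$ on which $St_M$ is conformally conjugate to an irrational rotation of the unit disc. *)

From HB Require Import structures.
From mathcomp Require Import all_boot all_order all_algebra.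
From mathcomp Require Import complex.
From mathcomp Require Import reals trigo.
Set Implicit Arguments. Unset Strict Implicit. Unset Printing Implicit Defensive.
Import Order.TTheory GRing.Theory Num.Theory.
Local Open Scope ring_scope.
Local Open Scope complex_scope.

Section RationalMaps.
Variable R : realType.
Notation C := R[i].

(* A rational function over C, represented as a pair (numerator, denominator)
   of polynomials; the denominator is meant to be nonzero. *)
Definition ratfun := ({poly C} * {poly C})%type.

Definition rf_id : ratfun := ('X, 1).
Definition rf_sub (f g : ratfun) : ratfun := (f.1 * g.2 - g.1 * f.2, f.2 * g.2).
Definition rf_div (f g : ratfun) : ratfun := (f.1 * g.2, f.2 * g.1).
Definition rf_deriv (f : ratfun) : ratfun :=
  (f.1^`() * f.2 - f.1 * f.2^`(), f.2 ^+ 2).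
(* composition f o g: with n = max degree of f.1, f.2, homogenize:
   f(r/s) = (sum_i f.1_i r^i s^(n-i)) / (sum_i f.2_i r^i s^(n-i)) *)
Definition hom_comp (p : {poly C}) (n : nat) (g : ratfun) : {poly C} :=
  \sum_(i < n.+1) p`_i *: (g.1 ^+ i * g.2 ^+ (n - i)).
Definition rf_comp (f g : ratfun) : ratfun :=
  let n := (maxn (size f.1) (size f.2)).-1 in (hom_comp f.1 n g, hom_comp f.2 n g).

Definition stirling (f : ratfun) : ratfun :=
  rf_sub rf_id (rf_div f (rf_comp (rf_deriv f) (rf_sub rf_id f))).

Definition mobius (a b c d : C) : ratfun := (a *: 'X + b%:P, c *: 'X + d%:P).

(* The rational self-map of the Riemann sphere determined by f: lowest terms. *)
Definition rf_reduce (f : ratfun) : ratfun :=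
  (f.1 %/ gcdp f.1 f.2, f.2 %/ gcdp f.1 f.2).

(* Points of the Riemann sphere: Some z (z in C) or None (infinity). *)
Definition sphere := option C.

Definition rf_deriv_at (f : ratfun) (z : C) : C :=
  (f.1^`().[z] * f.2.[z] - f.1.[z] * f.2^`().[z]) / (f.2.[z]) ^+ 2.

(* reversed polynomial: for p of degree n, w^n p(1/w) *)
Definition revpoly (p : {poly C}) : {poly C} := Poly (rev p).

(* In the chart w = 1/z at infinity, the map w |-> 1 / F(1/w) for F = P/Q
   (P, Q in lowest terms, deg P > deg Q) is  w^(degP - degQ) revQ(w) / revP(w). *)
Definition chart_inf (F : ratfun) : ratfun :=
  ('X ^+ (size F.1 - size F.2) * revpoly F.2, revpoly F.1).

Definition is_fixed_point (f : ratfun) (x : sphere) : Prop :=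
  let F := rf_reduce f in
  match x with
  | Some z => F.2.[z] != 0 /\ F.1.[z] = z * F.2.[z]
  | None => (size F.2 < size F.1)%N
  end.

Definition multiplier (f : ratfun) (x : sphere) : C :=
  let F := rf_reduce f in
  match x with
  | Some z => rf_deriv_at F z
  | None => rf_deriv_at (chart_inf F) 0
  end.

Definition irrationally_indifferent (lambda : C) : Prop :=
  exists theta : R, (forall q : rat, theta != ratr q) /\
    lambda = (cos (2 * pi * theta)) +i* (sin (2 * pi * theta)).

Definition irrationally_indifferent_fixed_point (f : ratfun) (x : sphere) : Prop :=
  is_fixed_point f x /\ irrationally_indifferent (multiplier f x).

End RationalMaps.

(* Write M = N/Q with N = az + b, Q = cz + d and det = ad - bc.  Since
   c (z - M z) + d = H/Q with H = Q^2 - cN, we get M'(z - M z) = det Q^2 / H^2, so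
   St_M = z - N H^2 / (det Q^3), and this fraction is already in lowest terms
   because the numerator does not vanish at the pole -d/c of M.  Hence the finite
   fixed points are the zeros of N, where the multiplier is 0, and the zeros of H,
   which are double zeros of N H^2 and have multiplier 1; infinity is fixed with
   multiplier 0 because the degree of the numerator exceeds that of the
   denominator by 2.  But e^(2 pi i theta) is neither 0 nor 1 for irrational
   theta, since cos (2 pi theta) = 1 forces theta to be an integer. *)

From mathcomp Require Import all_boot all_order all_algebra.
From mathcomp Require Import complex.
From mathcomp Require Import reals trigo.
From mathcomp Require Import ring lra zify.
Set Implicit Arguments. Unset Strict Implicit. Unset Printing Implicit Defensive.
Import Order.TTheory GRing.Theory Num.Theory.
Local Open Scope ring_scope.

Section IrrationalRotation.
Variable R : realType.

Lemma cos_eq1_02pi (x : R) : 0 <= x < pi *+ 2 -> cos x = 1 -> x = 0.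
Proof.
move=> /andP[x_ge0 x_lt2pi].
have pi_gt0 := @pi_gt0 R.
have half_le : 0 <= x / 2 <= pi by apply/andP; split; lra.
rewrite -[x](@divfK _ 2) ?pnatr_eq0 // mulr_natr cos_mulr2n => /eqP.
rewrite subr_eq -mulr2n eqrMn2r /= sqrf_eq1 => /orP[] /eqP cos_half.
  move: (@cos_inj R (x / 2) 0); rewrite !in_itv /= half_le lexx pi_ge0.
  by move=> /(_ isT isT (etrans cos_half (esym (cos0 R)))); lra.
move: (@cos_inj R (x / 2) pi); rewrite !in_itv /= half_le lexx pi_ge0.
by move=> /(_ isT isT (etrans cos_half (esym (cospi R)))); lra.
Qed.

Lemma cos_2pi_eq1 (t : R) : cos (2 * pi * t) = 1 -> exists n : nat, `|t| = n%:R.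
Proof.
have pi_gt0 := @pi_gt0 R.
have /andP[n_le n_gt] := truncn_itv (normr_ge0 t).
move: (Num.truncn _) n_le n_gt => n n_le n_gt.
rewrite -cos_norm normrM gtr0_norm ?mulr_gt0 //.
have -> : 2 * pi * `|t| = 2 * pi * (`|t| - n%:R) + (pi *+ 2) *+ n.
  by rewrite -mulr_natr -[pi *+ 2]mulr_natl; ring.
rewrite periodicn; last exact: cosD2pi.
rewrite -natr1 in n_gt => /cos_eq1_02pi.
have s_ge0 : 0 <= `|t| - n%:R by lra.
have s_lt1 : `|t| - n%:R < 1 by lra.
have /[swap]/[apply] : 0 <= 2 * pi * (`|t| - n%:R) < pi *+ 2.
  by apply/andP; split; nra.
move=> /eqP; rewrite !mulf_eq0 subr_eq0 pnatr_eq0 /= (gt_eqF pi_gt0) /=.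
by move=> /eqP ->; exists n.
Qed.

Lemma irrationally_indifferent_neq0 (l : R[i]) : irrationally_indifferent l -> l != 0.
Proof.
case=> th [_ ->]; apply/eqP => -[cos_eq0 sin_eq0].
by have := cos2Dsin2 (2 * pi * th); rewrite cos_eq0 sin_eq0; lra.
Qed.

Lemma irrationally_indifferent_neq1 (l : R[i]) : irrationally_indifferent l -> l != 1.
Proof.
case=> th [th_irr ->]; apply/eqP => -[/cos_2pi_eq1 [n th_n] _].
have [th_ge0|th_lt0] := lerP 0 th.
  by move: (th_irr n%:R); rewrite (ratr_nat R) -th_n ger0_norm ?eqxx.
move: (th_irr (- n%:Z)%:~R).
by rewrite (ratr_int R) intrN -pmulrn -th_n ltr0_norm ?opprK ?eqxx.
Qed.

End IrrationalRotation.

Lemma size_mul_eq (R : idomainType) (p q : {poly R}) m n :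
  size p = m.+1 -> size q = n.+1 -> size (p * q) = (m + n).+1.
Proof.
move=> size_p size_q.
by rewrite size_mul -?size_poly_eq0 ?size_p ?size_q // addSn addnS.
Qed.

Lemma size_scaleX_addC (R : idomainType) (u v : R) : u != 0 ->
  size (u *: 'X + v%:P) = 2%N.
Proof.
move=> u_neq0.
by rewrite -mul_polyC size_MXaddC polyC_eq0 (negbTE u_neq0) size_polyC u_neq0.
Qed.

Section RationalMapsInLowestTerms.
Variable R : realType.
Local Notation C := R[i].
Implicit Types (g h p q : {poly C}) (k z : C).

Lemma rf_reduce_coprime p q : coprimep p q ->
  exists2 k, k != 0 & rf_reduce (p, q) = (k *: p, k *: q).
Proof.
rewrite coprimep_def => /eqP size_gcd1.
have /size1_polyC gcdE : (size (gcdp p q) <= 1)%N by rewrite size_gcd1.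
set g := (gcdp p q)`_0 in gcdE.
have g_neq0 : g != 0.
  by apply: contra_eqN size_gcd1; rewrite gcdE => /eqP ->; rewrite size_polyC eqxx.
exists g^-1; first by rewrite invr_eq0.
by rewrite /rf_reduce /= gcdE -[g%:P]mulr1 mul_polyC !divpZr // !divp1.
Qed.

Lemma rf_deriv_atZ k p q z : k != 0 ->
  rf_deriv_at (k *: p, k *: q) z = rf_deriv_at (p, q) z.
Proof.
move=> k_neq0; rewrite /rf_deriv_at /= !derivZ !hornerZ.
have [qz0|qz_neq0] := eqVneq q.[z] 0; first by rewrite qz0 !(mulr0, expr0n, invr0).
by field; rewrite qz_neq0 k_neq0.
Qed.

Lemma is_fixed_point_coprime p q z : coprimep p q ->
  is_fixed_point (p, q) (Some z) <-> q.[z] != 0 /\ p.[z] = z * q.[z].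
Proof.
case/rf_reduce_coprime => k k_neq0 reduceE.
rewrite /is_fixed_point reduceE /= !hornerZ mulf_eq0 negb_or k_neq0 /= mulrCA.
by split=> -[qz_neq0 fixed_z]; split=> //; [apply: mulfI fixed_z | rewrite fixed_z].
Qed.

Lemma multiplier_coprime p q z : coprimep p q ->
  multiplier (p, q) (Some z) = rf_deriv_at (p, q) z.
Proof.
case/rf_reduce_coprime => k k_neq0 reduceE.
by rewrite /multiplier reduceE rf_deriv_atZ.
Qed.

Lemma rf_deriv_at_chart_inf (f : ratfun R) : (size f.2 + 2 <= size f.1)%N ->
  rf_deriv_at (chart_inf f) 0 = 0.
Proof.
move=> deg_gap; rewrite /chart_inf /rf_deriv_at /=.
set n := (size f.1 - size f.2)%N; set r := revpoly f.2.
have -> : 'X ^+ n * r = 'X ^+ 2 * ('X ^+ (n - 2) * r).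
  by rewrite mulrA -exprD subnKC //; lia.
by rewrite derivM derivXn !(hornerD, hornerM, hornerMn, horner_exp, hornerX); ring.
Qed.

Lemma multiplier_inf_coprime p q : coprimep p q -> (size q + 2 <= size p)%N ->
  multiplier (p, q) None = 0.
Proof.
case/rf_reduce_coprime => k k_neq0 reduceE deg_gap.
by rewrite /multiplier reduceE rf_deriv_at_chart_inf //= !size_scale.
Qed.

Lemma rf_deriv_at_Xsub q g z : q.[z] != 0 ->
  rf_deriv_at ('X * q - g, q) z = 1 - rf_deriv_at (g, q) z.
Proof.
move=> qz_neq0; rewrite /rf_deriv_at /= !(derivB, derivM, derivX) !hornerE.
by field.
Qed.

Lemma rf_deriv_at_double_root g h q z : h.[z] = 0 ->
  rf_deriv_at (g * h ^+ 2, q) z = 0.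
Proof.
move=> h_z; rewrite /rf_deriv_at /= derivM deriv_exp.
by rewrite !(hornerD, hornerM, hornerMn, horner_exp) h_z; ring.
Qed.

End RationalMapsInLowestTerms.

Section StirlingMobius.
Variable R : realType.
Local Notation C := R[i].
Variables a b c d : C.
Hypotheses (a_neq0 : a != 0) (c_neq0 : c != 0) (det_neq0 : a * d - b * c != 0).

Definition mob_num : {poly C} := a *: 'X + b%:P.
Definition mob_den : {poly C} := c *: 'X + d%:P.
Definition mob_det : C := a * d - b * c.

(* c (z - M z) + d = st_shift / mob_den *)
Definition st_shift : {poly C} := mob_den ^+ 2 - c *: mob_num.
Definition st_den : {poly C} := mob_det *: mob_den ^+ 3.
Definition st_num : {poly C} := 'X * st_den - mob_num * st_shift ^+ 2.

Lemma stirling_mobius : stirling (mobius a b c d) = (st_num, st_den).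
Proof.
have mob_derivE : rf_deriv (mobius a b c d) = (mob_det%:P, mob_den ^+ 2).
  by rewrite /rf_deriv /= !derivE /mob_det /mob_den -!mul_polyC; congr pair; ring.
have den2E : mob_den ^+ 2 = (c ^+ 2)%:P * 'X^2 + (2 * c * d)%:P * 'X + (d ^+ 2)%:P.
  by rewrite /mob_den -mul_polyC; ring.
have size_den1 : size mob_den = 2%N := size_scaleX_addC d c_neq0.
have size_den2 : size (mob_den ^+ 2) = 3%N.
  by rewrite expr2 (size_mul_eq size_den1 size_den1).
rewrite /stirling /rf_comp mob_derivE /= size_polyC size_den2.
have -> : (maxn (mob_det != 0) 3).-1 = 2%N by case: (mob_det != 0).
rewrite /hom_comp den2E !big_ord_recr !big_ord0 /=.
rewrite !coefD !coefCM !coefC !coefXn !coefX /=.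
rewrite /rf_sub /rf_div /= /st_num /st_den /st_shift /mob_num /mob_den -!mul_polyC.
by congr pair; ring.
Qed.

Lemma size_st_num_den : size st_num = 6%N /\ size st_den = 4%N.
Proof.
have size_num1 : size mob_num = 2%N := size_scaleX_addC b a_neq0.
have size_den1 : size mob_den = 2%N := size_scaleX_addC d c_neq0.
have size_den2 := size_mul_eq size_den1 size_den1.
have size_shift : size st_shift = 3%N.
  by rewrite /st_shift size_polyDl expr2 size_den2 // size_polyN size_scale ?size_num1.
have size_den : size st_den = 4%N.
  by rewrite size_scale // !exprS expr0 mulr1 (size_mul_eq size_den1 size_den2).
have size_rem := size_mul_eq size_num1 (size_mul_eq size_shift size_shift).
split=> //; rewrite /st_num addrC size_polyDl size_polyN expr2 size_rem //.
by rewrite (size_mul_eq (size_polyX _) size_den).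
Qed.

Lemma coprimep_st_num_den : coprimep st_num st_den.
Proof.
set z0 := - (d / c).
have denE : mob_den = c *: ('X - z0%:P).
  rewrite /mob_den -[in d%:P](divfK c_neq0 d) polyCM /z0 polyCN opprK.
  by rewrite -!mul_polyC; ring.
rewrite /st_den denE coprimepZr // coprimep_expr // coprimepZr // coprimep_XsubC /root.
have -> : st_num.[z0] = mob_det ^+ 3 / c.
  rewrite /st_num /st_den /st_shift denE /mob_num.
  rewrite !(hornerD, hornerN, hornerM, hornerZ, horner_exp, hornerX, hornerC).
  by rewrite /z0 /mob_det; field.
by rewrite mulf_neq0 ?expf_neq0 ?invr_eq0.
Qed.

Lemma rf_deriv_at_mob_num_root z : mob_num.[z] = 0 ->
  rf_deriv_at (mob_num * st_shift ^+ 2, st_den) z = 1.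
Proof.
rewrite /mob_num !hornerE => /eqP; rewrite addrC addr_eq0 => /eqP b_eq.
have detE : a * d - b * c = a * (c * z + d) by rewrite b_eq; ring.
have den_z : c * z + d != 0.
  by move: det_neq0; rewrite detE mulf_eq0 negb_or => /andP[].
rewrite /rf_deriv_at /st_den /st_shift /mob_num /mob_den /mob_det detE /=.
rewrite !(derivZ, derivD, derivN, derivM, derivC, derivX, deriv_exp).
rewrite !(hornerZ, hornerD, hornerN, hornerM, hornerC, hornerX, horner_exp, hornerMn).
by rewrite b_eq; field; rewrite den_z a_neq0.
Qed.

Lemma stirling_mobius_multiplier z : st_den.[z] != 0 -> st_num.[z] = z * st_den.[z] ->
  rf_deriv_at (st_num, st_den) z = 0 \/ rf_deriv_at (st_num, st_den) z = 1.
Proof.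
move=> den_z; rewrite /st_num rf_deriv_at_Xsub // hornerD hornerN hornerM hornerX.
move=> /eqP; rewrite subr_eq addrC -subr_eq subrr eq_sym hornerM horner_exp.
rewrite mulf_eq0 expf_eq0 /= => /orP[] /eqP root_z.
  by left; rewrite rf_deriv_at_mob_num_root ?subrr.
by right; rewrite rf_deriv_at_double_root ?subr0.
Qed.

End StirlingMobius.

Theorem mainTheorem12 (R : realType) (a b c d : R[i]) :
  a != 0 -> c != 0 -> a * d - b * c != 0 ->
  forall x : sphere R,
    ~ irrationally_indifferent_fixed_point (stirling (mobius a b c d)) x.
Proof.
move=> a_neq0 c_neq0 det_neq0 x [fixed_x irr].
have := irrationally_indifferent_neq1 irr; have := irrationally_indifferent_neq0 irr.
have coprime_st := coprimep_st_num_den c_neq0 det_neq0.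
move: fixed_x {irr}; rewrite stirling_mobius //; case: x => [z|].
  rewrite is_fixed_point_coprime // multiplier_coprime // => -[den_z fixed_z].
  by case: (stirling_mobius_multiplier a_neq0 det_neq0 den_z fixed_z) => ->; rewrite eqxx.
have [size_num size_den] := size_st_num_den a_neq0 c_neq0 det_neq0.
by rewrite multiplier_inf_coprime ?size_num ?size_den ?eqxx.
Qed.
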